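(* Let $H$ be a $K_4^{3-}$-free 3-graph on 5 vertices with at least 3 edges. Then $H$ is isomorphic to one of the following 3-graphs on vertex set $[5]$: $C_5$ with edges $\{123,234,345,451,512\}$; $C_5^-$ with edges $\{123,234,345,451\}$; $F_{3,2}$ with edges $\{123,124,125,345\}$; $H_1$ with edges $\{123,124,135,145\}$; $F_5$ with edges $\{123,124,345\}$; $H_2$ with edges $\{123,124,135\}$; $H_3$ with edges $\{123,124,125\}$.
   Context: A 3-graph is a 3-uniform hypergraph. $K_4^{3-}$ is the 3-graph with vertex set $[4]$ and edges $123,124,134$. A 3-graph is $K_4^{3-}$-free if it contains no (not necessarily induced) subhypergraph isomorphic to $K_4^{3-}$. *)

From mathcomp Require Import all_boot.
Set Implicit Arguments. Unset Strict Implicit. Unset Printing Implicit Defensive.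

Definition is_3graph (V : finType) (E : {set {set V}}) : Prop :=
  forall e, e \in E -> #|e| = 3.

(* K_4^{3-} (edges 123,124,134) is contained (not necessarily induced) in E
   iff there are 4 distinct vertices a,b,c,d with abc, abd, acd edges. *)
Definition K4m_free (V : finType) (E : {set {set V}}) : Prop :=
  forall a b c d : V,
    [&& a != b, a != c, a != d, b != c, b != d & c != d] ->
    ~ ([set a; b; c] \in E /\ [set a; b; d] \in E /\ [set a; c; d] \in E).

(* The edge {i,j,k} on vertex set [5], with vertices 1..5 encoded as 0..4 in 'I_5. *)
Definition tri5 (i j k : nat) : {set 'I_5} :=
  [set (inord i.-1 : 'I_5); inord j.-1; inord k.-1].

Definition iso_to5 (V : finType) (E : {set {set V}}) (G : {set {set 'I_5}}) : Prop :=
  exists f : V -> 'I_5, bijective f /\ [set f @: (e : {set V}) | e : {set V} in E] = G.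

Definition C5 : {set {set 'I_5}} :=
  [set tri5 1 2 3; tri5 2 3 4; tri5 3 4 5; tri5 4 5 1; tri5 5 1 2].
Definition C5m : {set {set 'I_5}} :=
  [set tri5 1 2 3; tri5 2 3 4; tri5 3 4 5; tri5 4 5 1].
Definition F32 : {set {set 'I_5}} :=
  [set tri5 1 2 3; tri5 1 2 4; tri5 1 2 5; tri5 3 4 5].
Definition H1 : {set {set 'I_5}} :=
  [set tri5 1 2 3; tri5 1 2 4; tri5 1 3 5; tri5 1 4 5].
Definition F5 : {set {set 'I_5}} :=
  [set tri5 1 2 3; tri5 1 2 4; tri5 3 4 5].
Definition H2 : {set {set 'I_5}} :=
  [set tri5 1 2 3; tri5 1 2 4; tri5 1 3 5].
Definition H3 : {set {set 'I_5}} :=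
  [set tri5 1 2 3; tri5 1 2 4; tri5 1 2 5].

From mathcomp Require Import all_boot.
Set Implicit Arguments. Unset Strict Implicit. Unset Printing Implicit Defensive.

(* Complementation in [5] turns triples into pairs and 4-sets into single
   vertices: a 4-set contains a triple exactly when the vertex it misses lies in
   the complementary pair.  Any three of the four triples of a 4-set share a
   vertex, so a 3-graph is K_4^{3-}-free iff every 4-set spans at most two edges,
   i.e. iff the graph of complementary pairs has maximum degree at most 2.  On
   five vertices the graphs of maximum degree 2 with at least three edges are
   C5, P5, C4+K1, C3+K2, P4+K1, P3+K2 and C3+2K1, whose complements are the seven
   3-graphs of the statement.
   The classification itself is checked by computation: identify V with 'I_5,
   represent an edge set by the sublist of the ten sorted triples it contains,
   and verify that every sublist with at least three edges and at most two edges
   in each 4-set is a relabelling of one of the seven. *)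

Section Relabel.

Variables V W : finType.

Definition relabel (f : V -> W) (E : {set {set V}}) : {set {set W}} :=
  [set f @: (e : {set V}) | e : {set V} in E].

Lemma imset_set3 (f : V -> W) a b c : f @: [set a; b; c] = [set f a; f b; f c].
Proof. by rewrite !imsetU !imset_set1. Qed.

Lemma mem_relabel f E (e : {set V}) : injective f -> (f @: e \in relabel f E) = (e \in E).
Proof. by move=> f_inj; rewrite mem_imset //; exact: imset_inj. Qed.

Lemma card_relabel f E : injective f -> #|relabel f E| = #|E|.
Proof. by move=> f_inj; rewrite card_imset //; exact: imset_inj. Qed.

Lemma is_3graph_relabel f E : injective f -> is_3graph E -> is_3graph (relabel f E).
Proof. by move=> f_inj E3 _ /imsetP[e eE ->]; rewrite card_imset // E3. Qed.

Lemma K4m_free_relabel f E : bijective f -> K4m_free E -> K4m_free (relabel f E).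
Proof.
case=> g fK gK K4 a b c d abcd.
rewrite -[a]gK -[b]gK -[c]gK -[d]gK -!imset_set3 !mem_relabel; try exact: can_inj fK.
by apply: K4; rewrite !(inj_eq (can_inj gK)).
Qed.

End Relabel.

Lemma relabel_comp (U V W : finType) (f : U -> V) (g : V -> W) E :
  relabel g (relabel f E) = relabel (g \o f) E.
Proof.
rewrite /relabel -imset_comp; apply: eq_imset => e /=; exact: esym (imset_comp _ _ _).
Qed.

Lemma card3P (T : finType) (e : {set T}) :
  #|e| = 3 -> exists a b c, uniq [:: a; b; c] /\ e = [set a; b; c].
Proof.
rewrite cardE; have := mem_enum e; have := enum_uniq e.
case: (enum e) => [|a [|b [|c []]]] // abc mem_e _; exists a, b, c; split=> //.
by apply/setP => x; rewrite -mem_e !inE orbA.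
Qed.

Lemma relabel_3graph (V W : finType) (f : V -> W) E G :
  bijective f -> is_3graph E -> is_3graph G ->
  (forall a b c, uniq [:: a; b; c] -> ([set a; b; c] \in E) = ([set f a; f b; f c] \in G)) ->
  relabel f E = G.
Proof.
case=> g fK gK E3 G3 fE; apply/setP => X; apply/imsetP/idP => [[e eE ->] | XG].
  have [a [b [c [abc e_abc]]]] := card3P (E3 _ eE).
  by rewrite e_abc imset_set3 -fE // -e_abc.
have [x [y [z [xyz X_xyz]]]] := card3P (G3 _ XG).
exists [set g x; g y; g z]; last by rewrite imset_set3 !gK.
by rewrite fE ?gK -?X_xyz // (map_inj_uniq (can_inj gK) [:: x; y; z]).
Qed.

Lemma iso_to5_relabel (V W : finType) (h : V -> W) E G :
  bijective h -> iso_to5 (relabel h E) G -> iso_to5 E G.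
Proof.
move=> h_bij [f [f_bij <-]]; exists (f \o h); split; first exact: bij_comp.
exact: esym (relabel_comp _ _ _).
Qed.

Lemma card_ord_bij (T : finType) n : #|T| = n -> exists f : T -> 'I_n, bijective f.
Proof. by move=> <-; exists enum_rank; exists enum_val; [exact: enum_rankK | exact: enum_valK]. Qed.

Lemma set3C12 (T : finType) (a b c : T) : [set a; b; c] = [set b; a; c].
Proof. by apply/setP => v; rewrite !inE (orbC (v == a)). Qed.

Lemma set3C23 (T : finType) (a b c : T) : [set a; b; c] = [set a; c; b].
Proof. by apply/setP => v; rewrite !inE orbAC. Qed.

Lemma uniq4 (T : eqType) (a b c d : T) :
  uniq [:: a; b; c; d] = [&& a != b, a != c, a != d, b != c, b != d & c != d].
Proof. by rewrite /= !inE !negb_or andbT -!andbA. Qed.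

Lemma K4m_free_quad (V : finType) (E : {set {set V}}) w x y z :
  K4m_free E -> uniq [:: w; x; y; z] ->
  ([set w; x; y] \in E) + ([set w; x; z] \in E) + ([set w; y; z] \in E)
    + ([set x; y; z] \in E) <= 2.
Proof.
move=> K4; rewrite uniq4 => wxyz; case/and4P: (wxyz) => wx wy wz /and3P[xy xz yz].
(* [Av]: the three triples through [v] are not all edges. *)
have Aw := K4 w x y z wxyz.
have := K4 x w y z; rewrite eq_sym wx xy xz wy wz yz => /(_ isT) Ax.
have := K4 y w x z; rewrite (eq_sym y w) (eq_sym y x) wy xy yz wx wz xz => /(_ isT) Ay.
have := K4 z w x y.
rewrite (eq_sym z w) (eq_sym z x) (eq_sym z y) wz xz yz wx wy xy => /(_ isT) Az.
move: Ax Ay Az; rewrite (set3C12 x w y) (set3C12 x w z) (set3C12 y w x) (set3C23 w y x).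
rewrite (set3C12 y w z) (set3C12 y x z) (set3C12 z w x) (set3C23 w z x).
rewrite (set3C12 z w y) (set3C23 w z y) (set3C12 z x y) (set3C23 x z y).
move: Aw; case: ([set w; x; y] \in E); case: ([set w; x; z] \in E);
  case: ([set w; y; z] \in E); case: ([set x; y; z] \in E) => /= // A1 A2 A3 A4; exfalso;
  by [apply: A1 | apply: A2 | apply: A3 | apply: A4].
Qed.

Fixpoint subseqs (T : Type) (s : seq T) : seq (seq T) :=
  if s is x :: s' then let ss := subseqs s' in map (cons x) ss ++ ss else [:: [::]].

Definition ksubseqs (T : Type) k (s : seq T) := [seq t <- subseqs s | size t == k].

Lemma mem_subseqs (T : eqType) (s t : seq T) : (t \in subseqs s) = subseq t s.
Proof.
elim: s t => [|x s IHs] [|y t] //=; rewrite mem_cat IHs ?sub0seq ?orbT //.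
have [-> | yx] := eqVneq y x.
  rewrite (mem_map (fun u v : seq T => @congr1 _ _ behead (x :: u) (x :: v))).
  rewrite IHs orb_idr //.
  exact: subseq_trans (subseq_cons t x).
by rewrite orb_idl // => /mapP[u _ [yx']]; rewrite yx' eqxx in yx.
Qed.

Lemma mem_ksubseqs (T : eqType) k (s t : seq T) :
  (t \in ksubseqs k s) = (size t == k) && subseq t s.
Proof. by rewrite mem_filter mem_subseqs. Qed.

Definition has_perm (T : eqType) (L : seq (seq T)) (t : seq T) := has (perm_eq t) L.

Definition perm_invariant (T : eqType) (P : pred (seq T)) :=
  forall t u, perm_eq t u -> P t = P u.

Lemma perm_invariant_has_perm (T : eqType) (L : seq (seq T)) : perm_invariant (has_perm L).
Proof. by move=> t u /permPl tu; exact: eq_has. Qed.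

Lemma has_perm_map (T U : eqType) (f : T -> U) L t :
  injective f -> has_perm (map (map f) L) (map f t) = has_perm L t.
Proof.
move=> f_inj; rewrite /has_perm has_map; apply: eq_has => u /=.
by apply/idP/idP => [/(perm_map_inj f_inj) | /(perm_map f)].
Qed.

Section SetsOfSeqs.

Variable T : finType.
Implicit Types (t u : seq T) (E : {set {set T}}).

Lemma set_seq3 (a b c : T) : [set x in [:: a; b; c]] = [set a; b; c].
Proof. by apply/setP => x; rewrite !inE orbA. Qed.

Lemma eq_set_perm t u : uniq t -> uniq u -> ([set x in t] == [set x in u]) = perm_eq t u.
Proof.
move=> tU uU; apply/eqP/idP => [/setP tu | /perm_mem tu]; last first.
  by apply/setP => x; rewrite !inE tu.
by apply: uniq_perm => // x; have := tu x; rewrite !inE.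
Qed.

Definition edges_of E : pred (seq T) := fun t => [set x in t] \in E.

Lemma perm_invariant_edges_of E : perm_invariant (edges_of E).
Proof.
by move=> t u /perm_mem tu; congr (_ \in E); apply/setP => x; rewrite !inE tu.
Qed.

Definition triple_graph (L : seq (seq T)) : {set {set T}} :=
  [set e in [seq [set x in t] | t <- L]].

Lemma mem_triple_graph L a b c : all uniq L -> uniq [:: a; b; c] ->
  ([set a; b; c] \in triple_graph L) = has_perm L [:: a; b; c].
Proof.
move=> LU abcU; rewrite inE -set_seq3.
apply/mapP/hasP => -[t tL abc_t]; have tU := allP LU t tL; exists t => //.
  by rewrite -eq_set_perm //; apply/eqP.
by apply/eqP; rewrite eq_set_perm.
Qed.

Lemma is_3graph_triple_graph L :
  all (fun t => uniq t && (size t == 3)) L -> is_3graph (triple_graph L).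
Proof.
move=> L3 e; rewrite inE => /mapP[t /(allP L3)/andP[tU /eqP t3] ->].
by rewrite cardsE (card_uniqP tU).
Qed.

End SetsOfSeqs.

Section EdgeLists.

Variables (T : finType) (vs : seq T).
Hypotheses (vs_uniq : uniq vs) (mem_vs : forall x, x \in vs).

Definition triples := ksubseqs 3 vs.

Definition edge_list (P : pred (seq T)) := [seq t <- triples | P t].

Definition K4m_freeb (s : seq (seq T)) :=
  all (fun S => count (mem s) (ksubseqs 3 S) <= 2) (ksubseqs 4 vs).

Lemma perm_triples t : uniq t -> size t = 3 -> exists2 u, u \in triples & perm_eq t u.
Proof.
move=> tU t3; have tvs : perm_eq t [seq x <- vs | x \in t].
  by apply: uniq_perm (filter_uniq _ vs_uniq) _ => // x; rewrite mem_filter mem_vs andbT.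
by exists [seq x <- vs | x \in t]; rewrite // mem_ksubseqs filter_subseq -(perm_size tvs) t3.
Qed.

Lemma mem_edge_list P t : perm_invariant P -> uniq t -> size t = 3 ->
  has_perm (edge_list P) t = P t.
Proof.
move=> P_inv tU t3; apply/hasP/idP => [[u] | Pt].
  by rewrite mem_filter => /andP[Pu _] /P_inv ->.
have [u u_trip tu] := perm_triples tU t3.
by exists u; rewrite // mem_filter u_trip -(P_inv _ _ tu) Pt.
Qed.

Lemma card_edge_list E : is_3graph E -> #|E| <= size (edge_list (edges_of E)).
Proof.
move=> E3; rewrite -(size_map (fun t => [set x in t])); apply: leq_trans (card_size _).
apply/subset_leq_card/subsetP => e eE; have := E3 e eE; rewrite cardE => e3.
have [u u_trip eu] := perm_triples (enum_uniq e) e3.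
have e_u : e = [set x in u] by apply/setP => x; rewrite inE -(perm_mem eu) mem_enum.
by rewrite e_u map_f // mem_filter u_trip andbT /edges_of -e_u.
Qed.

Lemma K4m_freeb_edge_list E : K4m_free E -> K4m_freeb (edge_list (edges_of E)).
Proof.
move=> K4; apply/allP => S; rewrite mem_ksubseqs => /andP[S4 S_vs].
have mem_S t : t \in ksubseqs 3 S -> (t \in edge_list (edges_of E)) = edges_of E t.
  rewrite mem_ksubseqs => /andP[t3 t_S].
  by rewrite mem_filter /triples mem_ksubseqs t3 (subseq_trans t_S S_vs) !andbT.
rewrite (eq_in_count mem_S); have := subseq_uniq S_vs vs_uniq.
case: S S4 {S_vs mem_S} => [|w [|x [|y [|z []]]]] // _ wxyz.
by rewrite /= /edges_of !set_seq3 addn0 !addnA K4m_free_quad.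
Qed.

Lemma iso_edge_list E L (f : T -> T) :
  is_3graph E -> all (fun t => uniq t && (size t == 3)) L -> bijective f ->
  edge_list (edges_of E) = edge_list (has_perm (map (map f) L)) ->
  exists g, bijective g /\ relabel g E = triple_graph L.
Proof.
move=> E3 L3 [g fK gK] E_L; exists g; split; first by exists f.
apply: relabel_3graph (is_3graph_triple_graph L3) _ => //; first by exists f.
move=> a b c abcU.
rewrite mem_triple_graph; first last.
- by rewrite (map_inj_uniq (can_inj gK) [:: a; b; c]).
- by apply/allP => t /(allP L3)/andP[].
rewrite -set_seq3 -[_ \in E]/(edges_of E _) -mem_edge_list ?E_L ?mem_edge_list //.
- have -> : [:: a; b; c] = map f [:: g a; g b; g c] by rewrite /= !gK.
  by rewrite has_perm_map //; exact: can_inj fK.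
- exact: perm_invariant_has_perm.
- exact: perm_invariant_edges_of.
Qed.

End EdgeLists.

Lemma nth_perm_bij n (q : seq 'I_n) : uniq q -> size q = n -> bijective (fun x => nth x q x).
Proof.
move=> qU qn; apply: injF_bij => x y /eqP.
rewrite (set_nth_default y) ?qn // nth_uniq ?qn // => /eqP; exact: val_inj.
Qed.

(* Explicit ordinals: [enum 'I_5] and [inord] do not reduce under [vm_compute]. *)
Definition ords5 : seq 'I_5 :=
  [:: Ordinal (isT : 0 < 5); Ordinal (isT : 1 < 5); Ordinal (isT : 2 < 5);
      Ordinal (isT : 3 < 5); Ordinal (isT : 4 < 5)].

Lemma val_ords5 : map val ords5 = iota 0 5. Proof. by []. Qed.

Lemma uniq_ords5 : uniq ords5.
Proof. by rewrite -(map_inj_uniq val_inj) val_ords5 iota_uniq. Qed.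

Lemma mem_ords5 x : x \in ords5.
Proof. by rewrite -(mem_map val_inj) val_ords5 mem_iota ltn_ord. Qed.

Lemma nth_ords5 n : n < 5 -> nth ord0 ords5 n = inord n.
Proof.
by move=> n5; apply: val_inj; rewrite /= inordK // -(nth_map ord0 0) // val_ords5 nth_iota.
Qed.

Definition triple5 (i j k : nat) : seq 'I_5 :=
  [:: nth ord0 ords5 i.-1; nth ord0 ords5 j.-1; nth ord0 ords5 k.-1].

Lemma set_triple5 i j k : i.-1 < 5 -> j.-1 < 5 -> k.-1 < 5 ->
  [set x in triple5 i j k] = tri5 i j k.
Proof. by move=> i5 j5 k5; rewrite /triple5 !nth_ords5 // set_seq3. Qed.

Definition targets5 : seq (seq (seq 'I_5)) :=
  [:: [:: triple5 1 2 3; triple5 2 3 4; triple5 3 4 5; triple5 4 5 1; triple5 5 1 2];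
      [:: triple5 1 2 3; triple5 2 3 4; triple5 3 4 5; triple5 4 5 1];
      [:: triple5 1 2 3; triple5 1 2 4; triple5 1 2 5; triple5 3 4 5];
      [:: triple5 1 2 3; triple5 1 2 4; triple5 1 3 5; triple5 1 4 5];
      [:: triple5 1 2 3; triple5 1 2 4; triple5 3 4 5];
      [:: triple5 1 2 3; triple5 1 2 4; triple5 1 3 5];
      [:: triple5 1 2 3; triple5 1 2 4; triple5 1 2 5]].

Lemma targets5_graphs :
  [seq triple_graph L | L <- targets5] = [:: C5; C5m; F32; H1; F5; H2; H3].
Proof.
by congr [:: _; _; _; _; _; _; _]; apply/setP => e; rewrite !inE /= !set_triple5 // !orbA.
Qed.

Lemma targets5_triples : all (all (fun t => uniq t && (size t == 3))) targets5.
Proof. by []. Qed.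

Definition copies5 (L : seq (seq 'I_5)) : seq (seq (seq 'I_5)) :=
  [seq edge_list ords5 (has_perm (map (map (fun x => nth x q x)) L))
  | q : seq 'I_5 <- permutations ords5].

(* A constant, so that [vm_compute] builds the 840 copies once, not once per
   candidate edge list. *)
Definition targets5_copies := map copies5 targets5.

Lemma classification5_check :
  all (fun s => (2 < size s) ==> K4m_freeb ords5 s ==> has (fun c => s \in c) targets5_copies)
    (subseqs (triples ords5)).
Proof. by vm_compute. Qed.

Lemma classification5 (E : {set {set 'I_5}}) : is_3graph E -> K4m_free E -> 3 <= #|E| ->
  exists2 L, L \in targets5 & iso_to5 E (triple_graph L).
Proof.
move=> E3 K4 E_ge3; set s := edge_list ords5 (edges_of E).
have s_sub : s \in subseqs (triples ords5) by rewrite mem_subseqs filter_subseq.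
have s_ge3 : 2 < size s := leq_trans E_ge3 (card_edge_list uniq_ords5 mem_ords5 E3).
have := allP classification5_check s s_sub.
rewrite s_ge3 (K4m_freeb_edge_list uniq_ords5 K4) !implyTb.
case/hasP=> _ /mapP[L LT ->] /mapP[q qP s_q].
exists L => //; apply: (iso_edge_list uniq_ords5 mem_ords5 E3 _ _ s_q).
  exact: (allP targets5_triples L LT).
rewrite mem_permutations in qP.
by apply: nth_perm_bij; rewrite ?(perm_uniq qP) ?(perm_size qP) ?uniq_ords5.
Qed.

Theorem lemma2p11 (V : finType) (E : {set {set V}}) :
  #|V| = 5 -> is_3graph E -> K4m_free E -> 3 <= #|E| ->
  iso_to5 E C5 \/ iso_to5 E C5m \/ iso_to5 E F32 \/ iso_to5 E H1 \/
  iso_to5 E F5 \/ iso_to5 E H2 \/ iso_to5 E H3.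
Proof.
move=> /card_ord_bij[h h_bij] E3 K4 E_ge3; have h_inj := bij_inj h_bij.
have E'_ge3 : 3 <= #|relabel h E| by rewrite card_relabel.
have [L LT /(iso_to5_relabel h_bij) isoE] :=
  classification5 (is_3graph_relabel h_inj E3) (K4m_free_relabel h_bij K4) E'_ge3.
have : triple_graph L \in [:: C5; C5m; F32; H1; F5; H2; H3] by rewrite -targets5_graphs map_f.
rewrite !inE => /orP[/eqP<- | /orP[/eqP<- | /orP[/eqP<- | /orP[/eqP<- |
  /orP[/eqP<- | /orP[/eqP<- | /eqP<-]]]]]]; tauto.
Qed.
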